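(* Let $X$ be an (absolutely) continuous nonnegative integrable random variable, let $H$ be a horizon with mean $\mu:=\mathbb{E}H$, and let $p>0$ be such that $\mathbb{P}(X\ge p)=1/\mu$. Then \[\mathbb{E}M_H\le\mathbb{E}(X\mid X\ge p),\] where $M_H:=\max_{i\le H}X_i$ and $X_1,X_2,\dots$ are i.i.d. copies of $X$ independent of $H$.
   Context: A horizon is a random variable supported on a subset of $\mathbb{N}=\{1,2,\dots\}$ with finite expectation. *)

From HB Require Import structures.
From mathcomp Require Import all_boot all_order all_algebra.
From mathcomp Require Import all_classical all_reals all_analysis.
Set Implicit Arguments. Unset Strict Implicit. Unset Printing Implicit Defensive.
Import Order.TTheory GRing.Theory Num.Theory.
Local Open Scope classical_set_scope.
Local Open Scope ring_scope.

(* Mutual independence of the family (H, Xs 0, Xs 1, ...): product rule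
   over every finite subfamily (unused members get the event setT). *)
Definition indep_horizon_seq d (T : measurableType d) (R : realType)
  (P : probability T R) (H : T -> nat) (Xs : nat -> T -> R) : Prop :=
  forall (A : set nat) (I : seq nat) (B : nat -> set R),
    uniq I ->
    (forall i, i \in I -> measurable (B i)) ->
    P (H @^-1` A `&` \bigcap_(i in [set` I]) (Xs i @^-1` B i)) =
    (P (H @^-1` A) * \prod_(i <- I) P (Xs i @^-1` B i))%E.

Definition same_distr d (T : measurableType d) (R : realType)
  (P : probability T R) (Y X : T -> R) : Prop :=
  forall B : set R, measurable B -> P (Y @^-1` B) = P (X @^-1` B).

Definition abs_continuous_rv d (T : measurableType d) (R : realType)
  (P : probability T R) (X : T -> R) : Prop :=
  forall B : set R, measurable B -> (@lebesgue_measure R) B = 0%E ->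
    P (X @^-1` B) = 0%E.

Definition cond_exp_event d (T : measurableType d) (R : realType)
  (P : probability T R) (X : T -> R) (A : set T) : \bar R :=
  ((\int[P]_(w in A) (X w)%:E) * ((fine (P A))^-1)%:E)%E.

(* M_H(w) = max_{1 <= i <= H w} X_i(w), where X_i = Xs (i-1) *)
Definition max_upto (R : realType) (Xs : nat -> R) (n : nat) : R :=
  \big[Order.max/0]_(i < n) Xs i.

From HB Require Import structures.
From mathcomp Require Import all_boot all_order all_algebra.
From mathcomp Require Import all_classical all_reals all_analysis.
From mathcomp Require Import measurable_realfun lra.
Set Implicit Arguments. Unset Strict Implicit. Unset Printing Implicit Defensive.
Import Order.TTheory GRing.Theory Num.Theory.
Local Open Scope classical_set_scope.
Local Open Scope ring_scope.

(* Pointwise, [max_(i<n) x_i <= p + sum_(i<n) (x_i - p)^+] for [p >= 0].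
   Taking expectations with [n = H] and using Wald's identity (H is independent
   of the i.i.d. copies X_i) gives [E M_H <= p + mu E(X - p)^+].  On the other
   hand [E(X; X >= p) = E(X - p)^+ + p P(X >= p) = E(X - p)^+ + p / mu], so
   [E(X | X >= p) = mu E(X - p)^+ + p] and the two sides meet. *)

Section integral_mrestr.
Local Open Scope ereal_scope.
Context d (T : measurableType d) (R : realType).
Import HBNNSimple.

Lemma integral_nnsfun_fsum D (mu : {measure set T -> \bar R}) (h : {nnsfun T >-> R}) :
  measurable D ->
  \int[mu]_(x in D) (h x)%:E = \sum_(r \in range h) r%:E * mu (h @^-1` [set r] `&` D).
Proof.
move=> mD; under eq_integral do rewrite fimfunE -fsumEFin//.
rewrite ge0_integral_fsum//; last 2 first.
- by move=> r; exact/measurable_EFinP/measurableT_comp.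
- by move=> n x _; rewrite nnfun_muleindic_ge0.
by apply: eq_fsbigr => r _; rewrite integralZl_indic_nnsfun// integral_indic.
Qed.

Lemma integral_mrestr (m : {measure set T -> \bar R}) (A : set T) (mA : measurable A)
    (f : T -> \bar R) :
  measurable_fun setT f -> (forall x, 0 <= f x) ->
  \int[mrestr m mA]_x f x = \int[m]_(x in A) f x.
Proof.
move=> mf f0; pose f_ := nnsfun_approx measurableT mf.
have f_cvg x : (fun n => (f_ n x)%:E) @ \oo --> f x by exact: cvg_nnsfun_approx.
have f_nd x : {homo (fun n => (f_ n x)%:E) : a b / (a <= b)%N >-> a <= b}.
  by move=> a b ab; rewrite lee_fin; exact/lefP/nd_nnsfun_approx.
have f_ge0 n x : 0 <= (f_ n x)%:E by rewrite lee_fin.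
have mf_ n : measurable_fun setT (fun x => (f_ n x)%:E).
  exact/measurable_EFinP/measurable_funPT.
transitivity (limn (fun n => \int[mrestr m mA]_x (f_ n x)%:E)).
  rewrite -monotone_convergence//.
  by apply: eq_integral => x _; apply/esym/cvg_lim.
transitivity (limn (fun n => \int[m]_(x in A) (f_ n x)%:E)).
  congr (limn _); apply/funext => n.
  rewrite !integral_nnsfun_fsum//; apply: eq_fsbigr => r _.
  by rewrite /mrestr setIT.
rewrite -monotone_convergence//; last by move=> n; exact: measurable_funTS.
by apply: eq_integral => x _; apply/cvg_lim.
Qed.

End integral_mrestr.

Section independent_event.
Local Open Scope ereal_scope.
Context d d' (T : measurableType d) (S : measurableType d') (R : realType).
Variables (P : probability T R) (A : set T) (mA : measurable A).
Variables (Y X : T -> S) (mY : measurable_fun setT Y) (mX : measurable_fun setT X).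

Lemma ge0_integral_indep_event (f : S -> \bar R) :
  measurable_fun setT f -> (forall y, 0 <= f y) ->
  (forall B, measurable B -> P (A `&` Y @^-1` B) = P A * P (X @^-1` B)) ->
  \int[P]_(w in A) f (Y w) = P A * \int[P]_w f (X w).
Proof.
move=> mf f0 indep.
have PA_fin : P A \is a fin_num.
  by rewrite ge0_fin_numE// (le_lt_trans (probability_le1 _ _))// ltey.
(* The law of Y under P restricted to A is P A times the law of X. *)
pose k : {nonneg R} := NngNum (fine_ge0 (measure_ge0 P A)).
rewrite -integral_mrestr//; last exact: measurableT_comp.
transitivity (\int[pushforward (mrestr P mA) Y]_y f y).
  by rewrite ge0_integral_pushforward.
pose Xm : {mfun T >-> S} := HB.pack X (isMeasurableFun.Build _ _ _ _ _ mX).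
transitivity (\int[mscale k (distribution P Xm)]_y f y).
  apply: eq_measure_integral => B mB _.
  change (P (Y @^-1` B `&` A) = (fine (P A))%:E * P (X @^-1` B)).
  by rewrite fineK// setIC indep.
by rewrite ge0_integral_mscale// fineK// ge0_integral_distribution.
Qed.

End independent_event.

Section nat_valued.
Context d (T : measurableType d) (R : realType) (H : T -> nat).
Hypothesis mH : forall n, measurable (H @^-1` [set n]).

Lemma measurable_fun_at_index (g : nat -> T -> R) :
  (forall n, measurable_fun setT (g n)) ->
  measurable_fun setT (fun w => g (H w) w).
Proof.
move=> mg _ B mB; rewrite setTI.
have -> : (fun w => g (H w) w) @^-1` B =
    \bigcup_n (H @^-1` [set n] `&` g n @^-1` B).
  by apply/seteqP; split => [w gB|w [n _ [/= <-]]]//; exists (H w).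
apply: bigcupT_measurable => n; apply: measurableI => //.
by rewrite -[X in measurable X]setTI; exact: mg.
Qed.

Local Open Scope ereal_scope.

Lemma ge0_integral_fibers (mu : {measure set T -> \bar R}) (f : T -> \bar R) :
  measurable_fun setT f -> (forall x, 0 <= f x) ->
  \int[mu]_x f x = \sum_(n <oo) \int[mu]_(x in H @^-1` [set n]) f x.
Proof.
move=> mf f0.
have cover : \bigcup_n H @^-1` [set n] = setT.
  by apply/seteqP; split => // w _; exists (H w).
rewrite -[in LHS]cover ge0_integral_bigcup ?cover//.
apply/trivIsetP => i j _ _ ij; apply/seteqP; split => // w [/= Hi Hj].
by move: ij; rewrite -Hi -Hj eqxx.
Qed.

End nat_valued.

Lemma integral_fiber d {T : measurableType d} {R : realType} {H : T -> nat}
    {mu : {measure set T -> \bar R}} {n : nat} (f : nat -> T -> \bar R) :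
  (\int[mu]_(x in H @^-1` [set n]) f (H x) x = \int[mu]_(x in H @^-1` [set n]) f n x)%E.
Proof. by apply: eq_integral => x; rewrite inE /= => ->. Qed.

Definition excess (R : realType) (p x : R) : R := Num.max (x - p) 0.

Lemma excess_ge0 (R : realType) (p x : R) : 0 <= excess p x.
Proof. by rewrite /excess le_max lexx orbT. Qed.

Lemma measurable_excess (R : realType) (p : R) : measurable_fun setT (excess p).
Proof.
apply: measurable_maxr; last exact: measurable_cst.
by apply: measurable_funB => //; exact: measurable_cst.
Qed.

Lemma max_upto_ge0 (R : realType) (xs : nat -> R) n : 0 <= max_upto xs n.
Proof. exact: bigmax_ge_id. Qed.

Lemma max_upto_le_excess (R : realType) (p : R) (xs : nat -> R) n : 0 <= p ->
  max_upto xs n <= p + \sum_(i < n) excess p (xs i).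
Proof.
move=> p0; have sum_ge0 : 0 <= \sum_(i < n) excess p (xs i).
  by apply: sumr_ge0 => i _; exact: excess_ge0.
apply: bigmax_le => [|i _]; first by rewrite addr_ge0.
have : excess p (xs i) <= \sum_(j < n) excess p (xs j).
  by rewrite (bigD1 i)//= lerDl sumr_ge0// => j _; exact: excess_ge0.
rewrite /excess ge_max => /andP[+ _]; lra.
Qed.

Lemma integral_tail_excess d (T : measurableType d) (R : realType)
    (mu : {measure set T -> \bar R}) (X : T -> R) (p : R) :
  measurable_fun setT X -> 0 <= p ->
  (\int[mu]_(w in [set w | (p <= X w)%R]) (X w)%:E =
   \int[mu]_w (excess p (X w))%:E + p%:E * mu [set w | (p <= X w)%R])%E.
Proof.
move=> mX p0.
have mtail : measurable [set w | p <= X w].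
  rewrite [X in measurable X](_ : _ = X @^-1` `[p, +oo[); last first.
    by apply/seteqP; split => w /=; rewrite in_itv /= andbT.
  by rewrite -[X in measurable X]setTI; exact: mX.
have mexcessX : measurable_fun setT (fun w => excess p (X w)).
  exact: measurableT_comp (measurable_excess p) mX.
rewrite (eq_integral (fun w => (excess p (X w))%:E + p%:E)%E); last first.
  by move=> w; rewrite inE /= => pX; rewrite /excess max_l ?subr_ge0// -EFinD subrK.
rewrite ge0_integralD//; last 2 first.
- by move=> w _; rewrite lee_fin excess_ge0.
- exact/measurable_EFinP/measurable_funTS.
rewrite integral_cst// integral_mkcond; congr (_ + _)%E.
apply: eq_integral => w _; rewrite /patch; case: ifPn => //.
rewrite notin_setE /= => /negP; rewrite -ltNge => Xp.
by rewrite /excess max_r// subr_le0 ltW.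
Qed.

Lemma measurable_max_upto d (T : measurableType d) (R : realType) (F : nat -> T -> R) n :
  (forall i, measurable_fun setT (F i)) ->
  measurable_fun setT (fun w => max_upto (F^~ w) n).
Proof.
elim: n F => [|n IH] F mF.
  by under eq_fun do rewrite /max_upto big_ord0; exact: measurable_cst.
under eq_fun do rewrite /max_upto big_ord_recl.
exact: measurable_maxr (mF 0%N) (IH (fun i => F i.+1) (fun i => mF i.+1)).
Qed.

Section horizon.
Local Open Scope ereal_scope.
Context d (T : measurableType d) (R : realType) (P : probability T R) (H : T -> nat).
Hypothesis mH : forall n, measurable (H @^-1` [set n]).

Let measurable_horizon : measurable_fun setT (fun w => ((H w)%:R : R)).
Proof.
by apply: (measurable_fun_at_index mH (g := fun n _ => n%:R)) => n; exact: measurable_cst.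
Qed.

Lemma horizon_mean_ge1 : P [set w | H w = 0%N] = 0 -> 1 <= \int[P]_w ((H w)%:R : R)%:E.
Proof.
move=> H0.
rewrite -(probability_setT P) -(mul1e (P setT)) -integral_cst//.
rewrite !(ge0_integral_fibers mH)//; last exact/measurable_EFinP.
apply: lee_nneseries => [n _ _|[|n] _]; first exact: integral_ge0.
  rewrite integral_cst// mul1e [X in X <= _](_ : _ = 0); last exact: H0.
  by apply: integral_ge0 => w _; rewrite lee_fin.
apply: ge0_le_integral => //; first exact/measurable_EFinP/measurable_funTS.
by move=> w /= ->; rewrite lee_fin ler1n.
Qed.

Variables (X : T -> R) (Xs : nat -> T -> R).
Hypotheses (mX : measurable_fun setT X) (mXs : forall i, measurable_fun setT (Xs i)).
Hypotheses (distrXs : forall i, same_distr P (Xs i) X) (indep : indep_horizon_seq P H Xs).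

Lemma indep_fiber n i B : measurable B ->
  P (H @^-1` [set n] `&` Xs i @^-1` B) = P (H @^-1` [set n]) * P (X @^-1` B).
Proof.
move=> mB; have := @indep [set n] [:: i] (fun _ => B) erefl (fun _ _ => mB).
by rewrite set_cons1 bigcap_set1 big_seq1 => ->; rewrite distrXs.
Qed.

Lemma ge0_wald (f : R -> R) : measurable_fun setT f -> (forall x, (0 <= f x)%R) ->
  \int[P]_w (\sum_(i < H w) f (Xs i w))%:E =
  \int[P]_w ((H w)%:R : R)%:E * \int[P]_w (f (X w))%:E.
Proof.
move=> mf f0.
have mEf : measurable_fun setT (EFin \o f) by exact/measurable_EFinP.
have Ef0 x : 0 <= (EFin \o f) x by rewrite lee_fin.
have mfXs i : measurable_fun setT (fun w => f (Xs i w)) by exact: measurableT_comp.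
have on_fiber n : \int[P]_(w in H @^-1` [set n]) (\sum_(i < n) f (Xs i w))%:E =
    \int[P]_w (f (X w))%:E * ((n%:R)%:E * P (H @^-1` [set n])).
  under eq_integral do rewrite -sumEFin.
  rewrite ge0_integral_sum//; last 2 first.
  - by move=> i; exact/measurable_EFinP/measurable_funTS.
  - by move=> i w _; rewrite lee_fin.
  under eq_bigr => i _ do
    rewrite (ge0_integral_indep_event (mH n) (mXs i) mX mEf Ef0 (indep_fiber n i)).
  by rewrite sumr_const card_ord -[LHS]mule_natl muleA muleC.
have mHE : measurable_fun setT (fun w => ((H w)%:R : R)%:E) by exact/measurable_EFinP.
have msum : measurable_fun setT (fun w => (\sum_(i < H w) f (Xs i w))%:E).
  apply/measurable_EFinP.
  apply: (measurable_fun_at_index mH (g := fun n w => (\sum_(i < n) f (Xs i w))%R)).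
  by move=> n; exact: measurable_sum.
rewrite muleC -ge0_integralZl//; last by apply: integral_ge0 => w _; rewrite lee_fin.
rewrite [LHS](ge0_integral_fibers mH)//; last by move=> w; rewrite lee_fin sumr_ge0.
rewrite [RHS](ge0_integral_fibers mH); last 2 first.
- exact: measurable_funeM.
- by move=> w; rewrite mule_ge0 ?lee_fin// integral_ge0// => x _; rewrite lee_fin.
apply: eq_eseriesr => n _.
rewrite (integral_fiber (fun n w => (\sum_(i < n) f (Xs i w))%:E)) on_fiber.
rewrite (integral_fiber (fun n _ => \int[P]_w (f (X w))%:E * (n%:R)%:E)).
by rewrite integral_cst// muleA.
Qed.

Lemma mean_max_upto_le (p : R) : (0 <= p)%R ->
  \int[P]_w (max_upto (Xs^~ w) (H w))%:E <=
  p%:E + \int[P]_w ((H w)%:R : R)%:E * \int[P]_w (excess p (X w))%:E.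
Proof.
move=> p0.
have mexcessXs i : measurable_fun setT (fun w => excess p (Xs i w)).
  exact: measurableT_comp (measurable_excess p) (mXs i).
have msum : measurable_fun setT (fun w => (\sum_(i < H w) excess p (Xs i w))%R).
  apply: (measurable_fun_at_index mH (g := fun n w => (\sum_(i < n) excess p (Xs i w))%R)).
  by move=> n; exact: measurable_sum.
have mmax : measurable_fun setT (fun w => max_upto (Xs^~ w) (H w)).
  apply: (measurable_fun_at_index mH (g := fun n w => max_upto (Xs^~ w) n)).
  by move=> n; exact: measurable_max_upto.
rewrite -(ge0_wald (measurable_excess p) (@excess_ge0 _ p)).
rewrite -[X in X + _](mule1 p%:E) -(probability_setT P) -integral_cst//.
rewrite -ge0_integralD//; last 2 first.
- by move=> w _; rewrite lee_fin sumr_ge0// => i _; exact: excess_ge0.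
- exact/measurable_EFinP.
apply: ge0_le_integral => //.
- by move=> w _; rewrite lee_fin max_upto_ge0.
- exact/measurable_EFinP.
- by apply: emeasurable_funD; [exact: measurable_cst | exact/measurable_EFinP].
- by move=> w _; rewrite /= -EFinD lee_fin max_upto_le_excess.
Qed.

End horizon.

Theorem lemma3 (d : measure_display) (T : measurableType d) (R : realType)
  (P : probability T R) (X : T -> R) (Xs : nat -> T -> R) (H : T -> nat) (p : R) :
  measurable_fun setT X ->
  abs_continuous_rv P X ->
  P [set w | X w < 0] = 0%E ->
  P.-integrable setT (EFin \o X) ->
  (forall n : nat, measurable (H @^-1` [set n])) ->
  P [set w | H w = 0%N] = 0%E ->
  (\int[P]_w ((H w)%:R : R)%:E < +oo)%E ->
  (forall i, measurable_fun setT (Xs i)) ->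
  (forall i, same_distr P (Xs i) X) ->
  indep_horizon_seq P H Xs ->
  0 < p ->
  P [set w | p <= X w] = ((fine (\int[P]_w ((H w)%:R : R)%:E))^-1)%:E ->
  (\int[P]_w (max_upto (fun i => Xs i w) (H w))%:E
     <= cond_exp_event P X [set w | (p <= X w)%R])%E.
Proof.
move=> mX _ _ intX mH H0 mean_fin mXs distrXs indep p0 Ptail.
have mean_ge1 := horizon_mean_ge1 mH H0.
set mean := (\int[P]_w _)%E in mean_ge1 mean_fin Ptail *.
have mean_fin_num : mean \is a fin_num by rewrite ge0_fin_numE// (le_trans lee01).
have mean_gt0 : 0 < fine mean by rewrite -lte_fin fineK// (lt_le_trans lte01).
set excessX := (\int[P]_w (excess p (X w))%:E)%E.
have excessX_fin : excessX \is a fin_num.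
  rewrite ge0_fin_numE; last by apply: integral_ge0 => w _; rewrite lee_fin excess_ge0.
  apply: le_lt_trans (integrableP _ _ _ intX).2; apply: ge0_le_integral => //.
  - by move=> w _; rewrite lee_fin excess_ge0.
  - exact/measurable_EFinP/(measurableT_comp (measurable_excess p) mX).
  - exact/measurable_EFinP/measurableT_comp.
  - move=> w _; rewrite lee_fin /excess ge_max normr_ge0 andbT.
    by rewrite (le_trans _ (ler_norm _))// lerBlDr lerDl ltW.
apply: (le_trans (mean_max_upto_le mH mX mXs distrXs indep (ltW p0))).
rewrite /cond_exp_event (integral_tail_excess _ mX (ltW p0)) -/mean -/excessX.
(* This occurrence of P is seen as a measure, so Ptail does not match it syntactically. *)
rewrite [X in ((_ + _ * X) * _)%E](_ : _ = ((fine mean)^-1)%:E); last exact: Ptail.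
rewrite Ptail /= invrK -(fineK mean_fin_num) -(fineK excessX_fin) -!EFinM -!EFinD.
rewrite lee_fin.
by rewrite mulrDl -mulrA mulVf ?gt_eqF// mulr1 addrC mulrC.
Qed.
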